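(* Let $|\psi\rangle_{AB}$ and $|\varphi\rangle_{AB}$ be pure states on finite-dimensional registers $A,B$, let $\rho_A=\mathrm{Tr}_B|\psi\rangle\langle\psi|$ and $\sigma_A=\mathrm{Tr}_B|\varphi\rangle\langle\varphi|$, let $\eta\ge 0$, and let $W=\mathrm{sgn}_\eta(\mathrm{Tr}_A(|\varphi\rangle\langle\psi|))$ be the canonical Uhlmann partial isometry with cutoff $\eta$ for $(|\psi\rangle,|\varphi\rangle)$. Then: (1) $W$ is a partial isometry on $B$; (2) $|\langle\varphi|(\mathrm{id}_A\otimes W)|\psi\rangle|^2\ \ge\ \mathrm{F}(\rho_A,\sigma_A)-2\eta\dim(B)$; (3) (minimality) for every partial isometry $R$ on $B$ with $\mathrm{F}(\rho_A,\sigma_A)=|\langle\varphi|(\mathrm{id}_A\otimes R)|\psi\rangle|^2$, we have $W^\dagger W\le R^\dagger R$ in the positive semidefinite order.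
   Context: Fidelity is $\mathrm{F}(\rho,\sigma)=\|\sqrt{\rho}\sqrt{\sigma}\|_1^2$ (squared convention). A linear map $U:A\to B$ is a partial isometry if $U=\tilde U\Pi$ for a projector $\Pi$ on $A$ and an isometry $\tilde U$. For $\eta\ge 0$ and an operator $K$ with singular value decomposition $K=U\Sigma V^\dagger$, define $\mathrm{sgn}_\eta(K)=U\,\mathrm{sgn}_\eta(\Sigma)V^\dagger$, where $\mathrm{sgn}_\eta(\Sigma)$ is the projector onto the span of the eigenvectors of $\Sigma$ with eigenvalue strictly greater than $\eta$. The canonical Uhlmann partial isometry with cutoff $\eta$ for a pair of pure states $(|\psi\rangle_{AB},|\varphi\rangle_{AB})$ is the operator $\mathrm{sgn}_\eta(\mathrm{Tr}_A(|\varphi\rangle\langle\psi|))$ on $B$. *)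

(* Finite-dimensional quantum states over a numeric closed
   field C (e.g. algC, or complex R for R real closed; C = the complex numbers). *)
From HB Require Import structures.
From mathcomp Require Import all_boot all_order all_algebra.
From mathcomp Require Import mxtens.
Set Implicit Arguments. Unset Strict Implicit. Unset Printing Implicit Defensive.
Import Order.TTheory GRing.Theory Num.Theory Num.Def.
Local Open Scope ring_scope.

Definition adj {C : numClosedFieldType} {m n : nat} (M : 'M[C]_(m, n)) : 'M[C]_(n, m) :=
  map_mx conjC (M ^T).

Definition psdmx {C : numClosedFieldType} {n : nat} (M : 'M[C]_n) : Prop :=
  adj M = M /\ forall v : 'cV[C]_n, 0 <= (adj v *m M *m v) 0 0.

Definition loewner_le {C : numClosedFieldType} {n : nat} (M N : 'M[C]_n) : Prop :=
  psdmx (N - M).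

Definition sqrtmx {C : numClosedFieldType} {n : nat} (M : 'M[C]_n) : 'M[C]_n :=
  invmx (spectralmx M) *m diag_mx (map_mx sqrtC (spectral_diag M))
        *m spectralmx M.

Definition trnorm {C : numClosedFieldType} {n : nat} (K : 'M[C]_n) : C :=
  \tr (sqrtmx (adj K *m K)).

(* Fidelity (squared convention)  F(rho, sigma) = ||sqrt rho sqrt sigma||_1^2. *)
Definition fidelity {C : numClosedFieldType} {n : nat} (rho sigma : 'M[C]_n) : C :=
  (trnorm (sqrtmx rho *m sqrtmx sigma)) ^+ 2.

(* Bipartite system AB with dim A = m, dim B = n; kets are column vectors in
   C^(m*n) = C^m (x) C^n, the basis vector |a>|b> having index mxtens_index (a,b)
   (the Kronecker / tensmx convention). *)
Definition ptraceB {C : numClosedFieldType} {m n : nat} (M : 'M[C]_(m * n)) : 'M[C]_m :=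
  \matrix_(a, a') \sum_(b < n) M (mxtens_index (a, b)) (mxtens_index (a', b)).

Definition ptraceA {C : numClosedFieldType} {m n : nat} (M : 'M[C]_(m * n)) : 'M[C]_n :=
  \matrix_(b, b') \sum_(a < m) M (mxtens_index (a, b)) (mxtens_index (a, b')).

Definition ketbra {C : numClosedFieldType} {k : nat} (phi psi : 'cV[C]_k) : 'M[C]_k :=
  phi *m adj psi.

Definition braket {C : numClosedFieldType} {k : nat} (phi : 'cV[C]_k) (X : 'M[C]_k)
  (psi : 'cV[C]_k) : C := (adj phi *m X *m psi) 0 0.

Definition pure_state {C : numClosedFieldType} {k : nat} (psi : 'cV[C]_k) : Prop :=
  adj psi *m psi = 1%:M.

Definition projector {C : numClosedFieldType} {n : nat} (P : 'M[C]_n) : Prop :=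
  adj P = P /\ P *m P = P.

Definition isometry {C : numClosedFieldType} {m n : nat} (U : 'M[C]_(n, m)) : Prop :=
  adj U *m U = 1%:M.

Definition partial_isometry {C : numClosedFieldType} {m n : nat} (U : 'M[C]_(n, m)) : Prop :=
  exists (Pi : 'M[C]_m) (Ut : 'M[C]_(n, m)), projector Pi /\ isometry Ut /\ U = Ut *m Pi.

Definition is_svd {C : numClosedFieldType} {n : nat} (K U V : 'M[C]_n) (s : 'rV[C]_n) : Prop :=
  U \is unitarymx /\ V \is unitarymx /\ (forall i, 0 <= s 0 i) /\
  K = U *m diag_mx s *m adj V.

Definition sgn_diag {C : numClosedFieldType} {n : nat} (eta : C) (s : 'rV[C]_n) : 'M[C]_n :=
  diag_mx (\row_i (if eta < s 0 i then 1 else 0)).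

Definition sgn_svd {C : numClosedFieldType} {n : nat} (eta : C) (U V : 'M[C]_n)
  (s : 'rV[C]_n) : 'M[C]_n :=
  U *m sgn_diag eta s *m adj V.

From Pilot Require Import Defs.
From HB Require Import structures.
From mathcomp Require Import all_boot all_order all_algebra.
From mathcomp Require Import mxtens.
From mathcomp Require Import ring.
Set Implicit Arguments. Unset Strict Implicit. Unset Printing Implicit Defensive.
Import Order.TTheory GRing.Theory Num.Theory Num.Def.
Local Open Scope ring_scope.

(* Write K = Tr_A |phi><psi| = U Sigma V^dagger (Sigma = diag s).  Writing
   psi, phi through their coefficient matrices X, Y, one has
   rho_A = X X^dagger, sigma_A = Y Y^dagger, K = (X^dagger Y)^T, and for any
   R on B the overlap <phi| id (x) R |psi> equals Tr(U^dagger R V Sigma).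

   - Uhlmann in singular-value form: sqrt(rho) sqrt(sigma) has Gram matrix
     Z Z^dagger where Z^dagger Z is unitarily similar to diag(s^2); by
     uniqueness of PSD square roots this gives F(rho_A, sigma_A) = (sum_i s_i)^2, and sum_i s_i <= 1.
   - W = U sgn_eta(Sigma) V^dagger is the isometry U V^dagger composed with
     the projector V sgn_eta(Sigma) V^dagger (part 1); its overlap is the
     mass of the s_i > eta, so W loses at most sum_{s_i <= eta} s_i <= eta n
     of the square root of the fidelity, whence part (2).
   - If R attains the fidelity, M = U^dagger R V satisfies |Tr(M Sigma)| =
     sum s_i while diag(M^dagger M) <= 1; hence the projector M^dagger M has
     unit diagonal, and so contains e_i, wherever s_i > eta.  Then
     R^dagger R - W^dagger W = V (M^dagger M - sgn_eta(Sigma)) V^dagger is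
     a conjugated projector, hence PSD (part 3). *)

Section Adjoint.
Variable C : numClosedFieldType.

Lemma adjE m n (A : 'M[C]_(m, n)) i j : adj A i j = (A j i)^*.
Proof. by rewrite !mxE. Qed.

Lemma adjK m n (A : 'M[C]_(m, n)) : adj (adj A) = A.
Proof. by apply/matrixP => i j; rewrite !adjE conjCK. Qed.

Lemma adjM m n p (A : 'M[C]_(m, n)) (B : 'M[C]_(n, p)) :
  adj (A *m B) = adj B *m adj A.
Proof. by rewrite /adj trmx_mul map_mxM. Qed.

Lemma adjB m n (A B : 'M[C]_(m, n)) : adj (A - B) = adj A - adj B.
Proof. by apply/matrixP => i j; rewrite !mxE rmorphB. Qed.

Lemma adj_scale m n (c : C) (A : 'M[C]_(m, n)) : adj (c *: A) = c^* *: adj A.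
Proof. by apply/matrixP => i j; rewrite !mxE rmorphM. Qed.

Lemma adj_id n : adj (1%:M : 'M[C]_n) = 1%:M.
Proof. by rewrite /adj trmx1 map_mx1. Qed.

Lemma adj_tr m n (A : 'M[C]_(m, n)) : adj (A^T) = (adj A)^T.
Proof. by apply/matrixP => i j; rewrite !mxE. Qed.

Lemma adj_tens m n p q (A : 'M[C]_(m, n)) (B : 'M[C]_(p, q)) :
  adj (tensmx A B) = tensmx (adj A) (adj B).
Proof.
apply/matrixP => i j.
case: (mxtens_indexP i) => a b; case: (mxtens_indexP j) => c d.
by rewrite adjE !tensmxE !adjE rmorphM.
Qed.

Lemma adj_diag n (t : 'rV[C]_n) :
  (forall i, t 0 i \is Num.real) -> adj (diag_mx t) = diag_mx t.
Proof.
move=> t_real; apply/matrixP => i j; rewrite !mxE eq_sym.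
case: eqP => [->|_]; last by rewrite !mulr0n rmorph0.
by rewrite !mulr1n; apply/CrealP.
Qed.

Lemma unitary_mulmx_adj n (U : 'M[C]_n) : U \is unitarymx -> U *m adj U = 1%:M.
Proof. by move/unitarymxP. Qed.

Lemma unitary_adj_mulmx n (U : 'M[C]_n) : U \is unitarymx -> adj U *m U = 1%:M.
Proof. by move/unitarymxP/mulmx1C. Qed.

End Adjoint.

Section Positivity.
Variable C : numClosedFieldType.

Lemma gram_diagE p q (M : 'M[C]_(p, q)) i :
  (adj M *m M) i i = \sum_k `|M k i| ^+ 2.
Proof. by rewrite mxE; apply: eq_bigr => k _; rewrite adjE normCKC. Qed.

Lemma gram_diag_ge p q (M : 'M[C]_(p, q)) i k : `|M k i| ^+ 2 <= (adj M *m M) i i.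
Proof.
by rewrite gram_diagE (bigD1 k) //= lerDl sumr_ge0 // => j _; rewrite exprn_ge0.
Qed.

Lemma gram_eq0 p q (M : 'M[C]_(p, q)) : adj M *m M = 0 -> M = 0.
Proof.
move=> MM0; apply/matrixP => i j; apply/eqP.
have /eqP : (adj M *m M) j j = 0 by rewrite MM0 mxE.
rewrite gram_diagE psumr_eq0 => [/allP/(_ i (mem_index_enum i))|k _].
  by rewrite /= sqrf_eq0 normr_eq0 mxE.
exact: exprn_ge0.
Qed.

Definition nrm2 p (v : 'cV[C]_p) : C := (adj v *m v) 0 0.

Lemma nrm2_ge0 p (v : 'cV[C]_p) : 0 <= nrm2 v.
Proof. by rewrite /nrm2 gram_diagE sumr_ge0 // => i _; rewrite exprn_ge0. Qed.

Lemma nrm2_eq0 p (v : 'cV[C]_p) : nrm2 v = 0 -> v = 0.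
Proof.
by move=> v0; apply: gram_eq0; apply/matrixP => i j; rewrite !ord1 [RHS]mxE.
Qed.

Lemma cauchy_schwarz_unit p (u v : 'cV[C]_p) : nrm2 u = 1 -> nrm2 v = 1 ->
  `|(adj u *m v) 0 0| <= 1.
Proof.
move=> nu nv; set c := (adj v *m u) 0 0.
have uv : (adj u *m v) 0 0 = c^*.
  rewrite /c !mxE rmorph_sum; apply: eq_bigr => k _.
  by rewrite !adjE rmorphM /= conjCK mulrC.
have scalar11 (x : C) (M : 'M[C]_1) : M 0 0 = x -> M = x%:M.
  by move=> Mx; apply/matrixP => i j; rewrite !ord1 Mx mxE.
have nrm_diff : nrm2 (u - c *: v) = 1 - `|c| ^+ 2.
  rewrite /nrm2 adjB adj_scale mulmxBl !mulmxBr -!scalemxAl -!scalemxAr.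
  rewrite (scalar11 _ _ nu) (scalar11 _ _ nv) (scalar11 _ _ uv) (scalar11 c _ erefl).
  by rewrite !mxE /= !mulr1n normCK mulr1 subrr subr0.
have := nrm2_ge0 (u - c *: v); rewrite nrm_diff subr_ge0 => c1.
by rewrite uv norm_conjC -(@expr_le1 _ 2).
Qed.

Lemma quad_conj_diag p q (Q : 'M[C]_(p, q)) (t : 'rV[C]_p) (v : 'cV[C]_q) :
  (adj v *m (adj Q *m diag_mx t *m Q) *m v) 0 0
    = \sum_i t 0 i * `|(Q *m v) i 0| ^+ 2.
Proof.
rewrite !mulmxA -adjM -mulmxA mxE; apply: eq_bigr => i _.
by rewrite mul_mx_diag !mxE normCKC mulrCA mulrA.
Qed.

Lemma psd_conj_diag p q (Q : 'M[C]_(p, q)) (t : 'rV[C]_p) :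
  (forall i, 0 <= t 0 i) -> psdmx (adj Q *m diag_mx t *m Q).
Proof.
move=> t_ge0; split.
  by rewrite !adjM adjK adj_diag ?mulmxA // => i; apply: ger0_real.
move=> v; rewrite quad_conj_diag sumr_ge0 // => i _.
by rewrite mulr_ge0 ?exprn_ge0.
Qed.

Lemma psd_gram p q (M : 'M[C]_(p, q)) : psdmx (adj M *m M).
Proof.
split; first by rewrite adjM adjK.
move=> v; have -> : adj v *m (adj M *m M) *m v = adj (M *m v) *m (M *m v).
  by rewrite adjM !mulmxA.
exact: nrm2_ge0.
Qed.

Lemma psd_conj p q (Q : 'M[C]_(p, q)) (A : 'M[C]_p) :
  psdmx A -> psdmx (adj Q *m A *m Q).
Proof.
move=> [A_herm A_ge0]; split; first by rewrite !adjM adjK A_herm mulmxA.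
move=> v; have -> : adj v *m (adj Q *m A *m Q) *m v = adj (Q *m v) *m A *m (Q *m v).
  by rewrite adjM !mulmxA.
exact: A_ge0.
Qed.

Lemma projector_psd n (P : 'M[C]_n) : projector P -> psdmx P.
Proof. by move=> [P_herm PP]; rewrite -PP -{1}P_herm; apply: psd_gram. Qed.

End Positivity.

Section SquareRoot.
Variable C : numClosedFieldType.

Lemma matrix_colP p q (A B : 'M[C]_(p, q)) :
  (forall j, A *m (delta_mx j 0 : 'cV_q) = B *m delta_mx j 0) -> A = B.
Proof.
move=> AB; apply/matrixP => i j.
by have /matrixP/(_ i 0) := AB j; rewrite -!colE !mxE.
Qed.

Lemma psd_spectral p (H : 'M[C]_p) : psdmx H ->
  H = adj (spectralmx H) *m diag_mx (spectral_diag H) *m spectralmx H /\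
  forall i, 0 <= spectral_diag H 0 i.
Proof.
move=> [H_herm H_ge0]; set P := spectralmx H; set d := spectral_diag H.
have P_unitary : P \is unitarymx := spectral_unitarymx H.
have H_normal : H \is normalmx.
  by apply/normalmxP; rewrite -[(H ^t*)%sesqui]/(adj H) H_herm.
have HE : H = adj P *m diag_mx d *m P.
  by rewrite {1}(orthomx_spectralP H_normal) invmx_unitary.
split => // i; have := H_ge0 (adj P *m delta_mx i 0).
rewrite [in X in _ <= X]HE quad_conj_diag mulmxA unitary_mulmx_adj // mul1mx.
rewrite (bigD1 i) //= big1 ?addr0 => [|k /negbTE ki]; rewrite mxE ?ki ?eqxx /=.
  by rewrite normr1 expr1n mulr1.
by rewrite normr0 expr0n mulr0.
Qed.

Lemma sqrtmx_spec p (H : 'M[C]_p) : psdmx H ->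
  psdmx (sqrtmx H) /\ sqrtmx H *m sqrtmx H = H.
Proof.
move=> H_psd; have [HE d_ge0] := psd_spectral H_psd.
set P := spectralmx H in HE *; set d := spectral_diag H in HE d_ge0 *.
have P_unitary : P \is unitarymx := spectral_unitarymx H.
have -> : sqrtmx H = adj P *m diag_mx (map_mx sqrtC d) *m P.
  by rewrite /sqrtmx invmx_unitary.
split; first by apply: psd_conj_diag => i; rewrite mxE sqrtC_ge0.
rewrite [RHS]HE -!mulmxA; congr (_ *m _); rewrite !mulmxA.
rewrite -[_ *m P *m adj P]mulmxA unitary_mulmx_adj // mulmx1 mulmx_diag.
by congr (diag_mx _ *m _); apply/rowP => j; rewrite !mxE -expr2 sqrtCK.
Qed.

Lemma psd_sq_eigen p (S : 'M[C]_p) (v : 'cV[C]_p) (t : C) :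
  psdmx S -> 0 <= t -> S *m (S *m v) = t ^+ 2 *: v -> S *m v = t *: v.
Proof.
move=> S_psd t_ge0 SSv; apply/eqP; rewrite -subr_eq0; apply/eqP.
set w := S *m v - t *: v.
have Sw : S *m w = - (t *: w).
  by rewrite /w mulmxBr -scalemxAr SSv expr2 -scalerA scalerBr opprB.
have form_w : (adj w *m S *m w) 0 0 = - (t * nrm2 w).
  by rewrite -mulmxA Sw mulmxN -scalemxAr /nrm2 !mxE.
have tw0 : t * nrm2 w = 0.
  apply/eqP; rewrite eq_le mulr_ge0 ?nrm2_ge0 // andbT -oppr_ge0 -form_w.
  by case: S_psd => _ ->.
move/eqP: tw0; rewrite mulf_eq0 => /orP[/eqP t0|/eqP/nrm2_eq0 //].
have wE : w = S *m v by rewrite /w t0 scale0r subr0.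
have Sw0 : S *m w = 0 by rewrite Sw t0 scale0r oppr0.
apply: nrm2_eq0; case: S_psd => S_herm _.
by rewrite /nrm2 {1}wE adjM S_herm -mulmxA Sw0 mulmx0 mxE.
Qed.

Lemma psd_sqrt_unique p (S T : 'M[C]_p) : psdmx S -> psdmx T ->
  S *m S = T *m T -> S = T.
Proof.
move=> S_psd T_psd STeq; have [TE t_ge0] := psd_spectral T_psd.
set Q := spectralmx T in TE *; set t := spectral_diag T in TE t_ge0 *.
have Q_unitary : Q \is unitarymx := spectral_unitarymx T.
have eigT j : T *m (adj Q *m delta_mx j 0) = t 0 j *: (adj Q *m delta_mx j 0).
  rewrite TE !mulmxA -[_ *m Q *m adj Q]mulmxA unitary_mulmx_adj // mulmx1.
  rewrite -mulmxA scalemxAr; congr (_ *m _); apply/matrixP => a b.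
  by rewrite mul_diag_mx !mxE; case: eqP => [->|]; rewrite ?mulr1 ?mulr0.
suff SQ : S *m adj Q = T *m adj Q.
  by rewrite -[S]mulmx1 -[T]mulmx1 -(unitary_adj_mulmx Q_unitary) !mulmxA SQ.
apply: matrix_colP => j; rewrite -!mulmxA eigT.
apply: psd_sq_eigen => //.
by rewrite !mulmxA STeq -!mulmxA eigT -scalemxAr eigT scalerA -expr2.
Qed.

Lemma gram_diag_support p q (F : 'M[C]_(p, q)) (s : 'rV[C]_q) :
  adj F *m F = diag_mx (\row_i (s 0 i ^+ 2)) ->
  F *m diag_mx (\row_i (s 0 i != 0)%:R) = F.
Proof.
move=> FF; apply/matrixP => k i; rewrite mul_mx_diag !mxE.
have [si0|si_neq0] := eqVneq (s 0 i) 0; last by rewrite mulr1.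
have := gram_diag_ge F i k; rewrite FF !mxE eqxx si0 expr0n mulr1n => Fki_le0.
by rewrite mulr0; apply/esym/eqP; rewrite -normr_eq0 -sqrf_eq0 eq_le Fki_le0 exprn_ge0.
Qed.

Lemma trace_sqrt_gram p q (Z : 'M[C]_(p, q)) (Q : 'M[C]_q) (s : 'rV[C]_q) :
  Q \is unitarymx -> (forall i, 0 <= s 0 i) ->
  adj Z *m Z = adj Q *m diag_mx (\row_i (s 0 i ^+ 2)) *m Q ->
  \tr (sqrtmx (Z *m adj Z)) = \sum_i s 0 i.
Proof.
move=> Q_unitary s_ge0 ZZ.
pose F := Z *m adj Q; pose D := diag_mx (\row_i (s 0 i)^-1).
have FF : adj F *m F = diag_mx (\row_i (s 0 i ^+ 2)).
  rewrite /F adjM adjK -mulmxA (mulmxA (adj Z)) ZZ !mulmxA.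
  by rewrite unitary_mulmx_adj // mul1mx -mulmxA unitary_mulmx_adj // mulmx1.
have DFFD : D *m (adj F *m F) *m D = diag_mx (\row_i (s 0 i != 0)%:R).
  rewrite FF !mulmx_diag; congr diag_mx; apply/rowP => i; rewrite !mxE.
  have [->|si] := eqVneq (s 0 i) 0; first by rewrite invr0 !mul0r.
  by rewrite expr2 mulrA mulVf // mul1r mulfV.
pose S := F *m D *m adj F.
have S_psd : psdmx S.
  by rewrite /S -{1}[F]adjK; apply: psd_conj_diag => i; rewrite mxE invr_ge0.
have SS : S *m S = Z *m adj Z.
  have -> : S *m S = F *m (D *m (adj F *m F) *m D) *m adj F by rewrite /S !mulmxA.
  rewrite DFFD gram_diag_support // /F adjM adjK mulmxA -(mulmxA Z).
  by rewrite unitary_adj_mulmx // mulmx1.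
have -> : sqrtmx (Z *m adj Z) = S.
  have ZZ_psd : psdmx (Z *m adj Z) by rewrite -{1}[Z]adjK; apply: psd_gram.
  have [sqrt_psd sqrt_sq] := sqrtmx_spec ZZ_psd.
  by apply: psd_sqrt_unique => //; rewrite sqrt_sq SS.
rewrite /S mxtrace_mulC mulmxA FF mulmx_diag mxtrace_diag.
apply: eq_bigr => i _; rewrite !mxE.
have [->|si] := eqVneq (s 0 i) 0; first by rewrite expr2 !mul0r.
by rewrite expr2 mulfK.
Qed.

End SquareRoot.

Section States.
Variable C : numClosedFieldType.

Lemma ketbraE k (u v : 'cV[C]_k) i j : ketbra u v i j = u i 0 * (v j 0)^*.
Proof. by rewrite /ketbra mxE big_ord1 adjE. Qed.

Lemma pure_state_nrm2 k (psi : 'cV[C]_k) : pure_state psi -> nrm2 psi = 1.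
Proof. by rewrite /pure_state /nrm2 => ->; rewrite mxE. Qed.

Lemma braket_isometry_le1 k (phi psi : 'cV[C]_k) (M : 'M[C]_k) :
  pure_state phi -> pure_state psi -> adj M *m M = 1%:M ->
  `|braket phi M psi| <= 1.
Proof.
move=> /pure_state_nrm2 phi1 /pure_state_nrm2 psi1 MM.
rewrite /braket -mulmxA; apply: cauchy_schwarz_unit => //.
by rewrite /nrm2 adjM -mulmxA (mulmxA (adj M)) MM mul1mx.
Qed.

Lemma tens_id m n : tensmx (1%:M : 'M[C]_m) (1%:M : 'M[C]_n) = 1%:M.
Proof.
apply/matrixP => i j.
case: (mxtens_indexP i) => a b; case: (mxtens_indexP j) => c d.
rewrite tensmxE !mxE (can_eq (@mxtens_indexK m n)) xpair_eqE.
by case: (a == c); case: (b == d); rewrite ?mulr1n ?mulr0n ?mulr1 ?mulr0.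
Qed.

Lemma isometry_id_tens m n (R : 'M[C]_n) : adj R *m R = 1%:M ->
  adj (tensmx (1%:M : 'M[C]_m) R) *m tensmx 1%:M R = 1%:M.
Proof. by move=> RR; rewrite adj_tens tensmx_mul adj_id mul1mx RR tens_id. Qed.

End States.

Section Bipartite.
Variables (C : numClosedFieldType) (m n : nat).

Definition coef_mx (psi : 'cV[C]_(m * n)) : 'M[C]_(m, n) :=
  \matrix_(a, b) psi (mxtens_index (a, b)) 0.

Lemma sum_tens (F : 'I_(m * n) -> C) :
  \sum_k F k = \sum_a \sum_b F (mxtens_index (a, b)).
Proof.
rewrite (reindex (@mxtens_index m n)) /=; last first.
  by exists (@mxtens_unindex m n) => x _; [exact: mxtens_indexK | exact: mxtens_unindexK].
by rewrite pair_big /=; apply: eq_bigr => -[a b].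
Qed.

Lemma ptraceB_ketbra (psi : 'cV[C]_(m * n)) :
  ptraceB (ketbra psi psi) = coef_mx psi *m adj (coef_mx psi).
Proof.
apply/matrixP => a a'; rewrite !mxE; apply: eq_bigr => b _.
by rewrite ketbraE adjE !mxE.
Qed.

Lemma ptraceA_ketbra (phi psi : 'cV[C]_(m * n)) :
  ptraceA (ketbra phi psi) = (adj (coef_mx psi) *m coef_mx phi)^T.
Proof.
apply/matrixP => b b'; rewrite !mxE; apply: eq_bigr => a _.
by rewrite ketbraE adjE !mxE mulrC.
Qed.

Lemma braket_id_tens (phi psi : 'cV[C]_(m * n)) (R : 'M[C]_n) :
  braket phi (tensmx (1%:M : 'M[C]_m) R) psi
    = \tr (R *m adj (ptraceA (ketbra phi psi))).
Proof.
rewrite /braket mxE sum_tens.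
(* both sides are sum_{a,b,b'} conj(phi_ab) R_bb' psi_ab' *)
have -> : \tr (R *m adj (ptraceA (ketbra phi psi))) =
  \sum_a \sum_b \sum_b' (phi (mxtens_index (a, b)) 0)^* * R b b' *
      psi (mxtens_index (a, b')) 0.
  rewrite /mxtrace exchange_big; apply: eq_bigr => b _.
  rewrite mxE (eq_bigr (fun j => R b j * (ptraceA (ketbra phi psi) b j)^*)); last first.
    by move=> j _; rewrite adjE.
  under eq_bigr do rewrite mxE rmorph_sum mulr_sumr.
  rewrite exchange_big; apply: eq_bigr => a _; apply: eq_bigr => b' _.
  by rewrite ketbraE rmorphM /= conjCK mulrCA mulrA.
apply: eq_bigr => a _; rewrite exchange_big; apply: eq_bigr => b' _.
rewrite -mulr_suml; congr (_ * _).
rewrite mxE sum_tens (bigD1 a) //= [X in _ + X]big1 ?addr0; last first.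
  move=> a' /negbTE aa'; apply: big1 => b _.
  by rewrite tensmxE [1%:M _ _]mxE aa' mulr0n mul0r mulr0.
by apply: eq_bigr => b _; rewrite adjE tensmxE mxE eqxx mulr1n mul1r.
Qed.

End Bipartite.

Section Projectors.
Variable C : numClosedFieldType.

(* The range projector R^dagger R of a partial isometry R = Ut Pi is Pi. *)
Lemma partial_isometry_gram m n (R : 'M[C]_(n, m)) :
  partial_isometry R -> projector (adj R *m R).
Proof.
move=> [Pi [Ut [[Pi_herm PiPi] [Ut_iso ->]]]].
by rewrite adjM Pi_herm -mulmxA (mulmxA (adj Ut)) Ut_iso mul1mx PiPi.
Qed.

Lemma projector_conj p q (Q : 'M[C]_(p, q)) (P : 'M[C]_p) :
  Q *m adj Q = 1%:M -> projector P -> projector (adj Q *m P *m Q).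
Proof.
move=> QQ [P_herm PP]; split; first by rewrite !adjM adjK P_herm mulmxA.
by rewrite !mulmxA -(mulmxA _ Q (adj Q)) QQ mulmx1 -(mulmxA (adj Q)) PP.
Qed.

Lemma projector_indicator n (b : 'I_n -> bool) :
  projector (diag_mx (\row_i (b i)%:R) : 'M[C]_n).
Proof.
split; first by apply: adj_diag => i; rewrite mxE realn.
by rewrite mulmx_diag; congr diag_mx; apply/rowP => i; rewrite !mxE -natrM mulnb andbb.
Qed.

Lemma projector_diag_le1 n (P : 'M[C]_n) : projector P -> forall i, P i i <= 1.
Proof.
move=> [P_herm PP] i; have := gram_diag_ge P i i; rewrite P_herm PP.
have Pii_ge0 : 0 <= P i i by rewrite -PP -{1}P_herm gram_diagE sumr_ge0 // => k _; rewrite exprn_ge0.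
rewrite ger0_norm // => sq_le; have [->|Pii_neq0] := eqVneq (P i i) 0; first exact: ler01.
by rewrite -(@ler_pM2l _ (P i i)) ?mulr1 -?expr2 // lt_def Pii_neq0.
Qed.

Lemma projector_diag1_col n (P : 'M[C]_n) i k :
  projector P -> P i i = 1 -> k != i -> P k i = 0.
Proof.
move=> [P_herm PP] Pii1 ki; have := gram_diag_ge P i i.
have := gram_diagE P i; rewrite P_herm PP Pii1 (bigD1 i) //= Pii1 normr1 expr1n.
move/eqP; rewrite addrC -subr_eq subrr eq_sym psumr_eq0 => [|j _]; last exact: exprn_ge0.
by move=> /allP/(_ k (mem_index_enum k)); rewrite /= ki sqrf_eq0 normr_eq0 => /eqP.
Qed.

Lemma projector_sub_indicator n (P : 'M[C]_n) (b : 'I_n -> bool) :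
  projector P -> (forall i, b i -> P i i = 1) ->
  projector (P - diag_mx (\row_i (b i)%:R)).
Proof.
move=> P_proj Pb; have [G_herm GG] := projector_indicator b.
have [P_herm PP] := P_proj; set G := diag_mx _ in G_herm GG *.
have PG : P *m G = G.
  apply/matrixP => k j; rewrite mul_mx_diag !mxE.
  have [->|kj] := eqVneq k j.
    rewrite /= mulr1n; case: (boolP (b j)) => [b_j|_]; first by rewrite Pb ?mul1r.
    by rewrite mulr0n mulr0.
  rewrite /= ?mulr0n; case: (boolP (b j)) => [b_j|_]; last by rewrite mulr0n mulr0.
  by rewrite (projector_diag1_col P_proj (Pb j b_j) kj) mul0r.
have GP : G *m P = G by have := congr1 adj PG; rewrite adjM G_herm P_herm.
split; first by rewrite adjB P_herm G_herm.
by rewrite mulmxBl !mulmxBr PP PG GP GG subrr subr0.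
Qed.

(* If diag(M^dagger M) <= 1 and |Tr(M diag s)| = sum s for s >= 0, then
   (M^dagger M)_ii = 1 wherever s_i != 0: the overlap bound is tight only
   if M acts isometrically on the support of s. *)
Lemma tight_overlap n (M : 'M[C]_n) (s : 'rV[C]_n) :
  (forall i, (adj M *m M) i i <= 1) -> (forall i, 0 <= s 0 i) ->
  `|\tr (M *m diag_mx s)| = \sum_i s 0 i ->
  forall i, s 0 i != 0 -> (adj M *m M) i i = 1.
Proof.
move=> MM_le1 s_ge0 tight i si_neq0.
have M_le1 k : `|M k k| <= 1.
  by rewrite -(@expr_le1 _ 2) //; apply: le_trans (gram_diag_ge M k k) (MM_le1 k).
have trE : \tr (M *m diag_mx s) = \sum_k M k k * s 0 k.
  by apply: eq_bigr => k _; rewrite mul_mx_diag mxE.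
have slack : \sum_k (1 - `|M k k|) * s 0 k = 0.
  apply/eqP; rewrite eq_le sumr_ge0 ?andbT => [|k _]; last by rewrite mulr_ge0 ?subr_ge0.
  rewrite (eq_bigr (fun k => s 0 k - `|M k k| * s 0 k)) => [|k _]; last first.
    by rewrite mulrBl mul1r.
  rewrite sumrB subr_le0 -tight trE (le_trans (ler_norm_sum _ _ _)) //.
  by apply: ler_sum => k _; rewrite normrM (ger0_norm (s_ge0 k)).
move/eqP: slack; rewrite psumr_eq0 => [|k _]; last by rewrite mulr_ge0 ?subr_ge0.
move=> /allP/(_ i (mem_index_enum i)).
rewrite /= mulf_eq0 (negbTE si_neq0) orbF subr_eq0 => /eqP Mii1.
by apply/eqP; rewrite eq_le MM_le1 /= -(@expr1n C 2) Mii1 gram_diag_ge.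
Qed.

End Projectors.

Section Cutoff.
Variable C : numClosedFieldType.

Lemma sgn_diagE n (eta : C) (s : 'rV[C]_n) :
  sgn_diag eta s = diag_mx (\row_i (eta < s 0 i)%R%:R).
Proof. by congr diag_mx; apply/rowP => i; rewrite !mxE; case: ifP. Qed.

Lemma sgn_svd_partial_isometry n (eta : C) (U V : 'M[C]_n) (s : 'rV[C]_n) :
  U \is unitarymx -> V \is unitarymx -> partial_isometry (sgn_svd eta U V s).
Proof.
move=> U_unitary V_unitary; rewrite /sgn_svd sgn_diagE.
have [G_herm GG] := projector_indicator C (fun i => eta < s 0 i).
set G := diag_mx _ in G_herm GG *.
exists (V *m G *m adj V), (U *m adj V); split; [split|split].
- by rewrite !adjM adjK G_herm mulmxA.
- rewrite !mulmxA -(mulmxA _ (adj V) V) unitary_adj_mulmx // mulmx1.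
  by rewrite -(mulmxA V) GG.
- rewrite /Defs.isometry adjM adjK -mulmxA (mulmxA (adj U)) unitary_adj_mulmx //.
  by rewrite mul1mx unitary_mulmx_adj.
- by rewrite !mulmxA -(mulmxA U (adj V) V) unitary_adj_mulmx // mulmx1.
Qed.

Lemma sgn_svd_gram n (eta : C) (U V : 'M[C]_n) (s : 'rV[C]_n) :
  U \is unitarymx ->
  adj (sgn_svd eta U V s) *m sgn_svd eta U V s = V *m sgn_diag eta s *m adj V.
Proof.
move=> U_unitary; rewrite /sgn_svd sgn_diagE.
have [G_herm GG] := projector_indicator C (fun i => eta < s 0 i).
rewrite !adjM adjK G_herm !mulmxA -(mulmxA _ (adj U) U) unitary_adj_mulmx //.
by rewrite mulmx1 -(mulmxA V) GG.
Qed.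

Lemma below_cutoff_le n (eta : C) (s : 'rV[C]_n) :
  0 <= eta -> (forall i, 0 <= s 0 i) ->
  \sum_i (~~ (eta < s 0 i))%R%:R * s 0 i <= eta * n%:R.
Proof.
move=> eta_ge0 s_ge0.
have -> : eta * n%:R = \sum_(i < n) eta by rewrite sumr_const card_ord mulr_natr.
apply: ler_sum => i _; case: (boolP (eta < s 0 i)) => [_|not_above].
  by rewrite /= mulr0n mul0r.
by rewrite /= mulr1n mul1r real_leNgt ?ger0_real.
Qed.

(* Elementary estimate: if x, y >= 0, x + y <= 1 and y <= e,
   then (x + y)^2 - 2e <= x^2, since (x + y)^2 - x^2 = y (2x + y) <= 2y. *)
Lemma sq_drop_le (R : numDomainType) (x y e : R) :
  0 <= x -> 0 <= y -> x + y <= 1 -> y <= e -> (x + y) ^+ 2 - 2%:R * e <= x ^+ 2.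
Proof.
move=> x_ge0 y_ge0 xy_le1 y_le_e.
have -> : (x + y) ^+ 2 = x ^+ 2 + y * (x + (x + y)) by ring.
rewrite -addrA gerDl subr_le0 (@le_trans _ _ (y * 2%:R)) //.
  by rewrite ler_wpM2l // mulr2n lerD // (le_trans _ xy_le1) // lerDl.
by rewrite mulrC ler_wpM2l.
Qed.

End Cutoff.

Section UhlmannSVD.
Variables (C : numClosedFieldType) (m n : nat) (psi phi : 'cV[C]_(m * n)).
Variables (U V : 'M[C]_n) (s : 'rV[C]_n).
Hypothesis svd : is_svd (ptraceA (ketbra phi psi)) U V s.

Let s_real i : s 0 i \is Num.real.
Proof. by case: svd => _ [_ [s_ge0 _]]; apply: ger0_real. Qed.

Lemma braket_svd (R : 'M[C]_n) :
  braket phi (tensmx (1%:M : 'M[C]_m) R) psi = \tr (adj U *m R *m V *m diag_mx s).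
Proof.
case: svd => _ [_ [_ KE]].
rewrite braket_id_tens KE !adjM adjK adj_diag //.
by rewrite !mulmxA mxtrace_mulC !mulmxA.
Qed.

Lemma fidelity_svd :
  fidelity (ptraceB (ketbra psi psi)) (ptraceB (ketbra phi phi)) = (\sum_i s 0 i) ^+ 2.
Proof.
case: svd => U_unitary [V_unitary [s_ge0 KE]].
rewrite /fidelity /trnorm !ptraceB_ketbra.
set X := coef_mx psi; set Y := coef_mx phi.
have XX_psd : psdmx (X *m adj X) by rewrite -{1}[X]adjK; apply: psd_gram.
have YY_psd : psdmx (Y *m adj Y) by rewrite -{1}[Y]adjK; apply: psd_gram.
have [[rt_herm _] rt_sq] := sqrtmx_spec XX_psd.
have [[st_herm _] st_sq] := sqrtmx_spec YY_psd.
set rt := sqrtmx (X *m adj X) in rt_herm rt_sq *.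
set st := sqrtmx (Y *m adj Y) in st_herm st_sq *.
clearbody rt st.
have gram_rs : adj (rt *m st) *m (rt *m st) = (st *m X) *m adj (st *m X).
  rewrite [adj (rt *m st)]adjM [adj (st *m X)]adjM rt_herm st_herm !mulmxA.
  by rewrite -(mulmxA st rt rt) rt_sq !mulmxA.
(* X^dagger Y is the transpose of Tr_A |phi><psi| = U Sigma V^dagger *)
have XY : adj X *m Y = adj (V^T) *m diag_mx s *m U^T.
  rewrite -[adj X *m Y]trmxK -ptraceA_ketbra KE !trmx_mul tr_diag_mx adj_tr.
  by rewrite mulmxA.
rewrite gram_rs (@trace_sqrt_gram _ _ _ _ (V^T) s) ?trmx_unitary //.
have -> : adj (st *m X) *m (st *m X) = (adj X *m Y) *m adj (adj X *m Y).
  by rewrite !adjM adjK st_herm !mulmxA -(mulmxA _ st st) st_sq !mulmxA.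
rewrite XY !adjM adjK adj_diag // !adj_tr.
rewrite -!mulmxA (mulmxA (U^T)) -trmx_mul unitary_adj_mulmx // trmx1 mul1mx.
rewrite (mulmxA (diag_mx s)) mulmx_diag !mulmxA.
by congr (_ *m diag_mx _ *m _); apply/rowP => i; rewrite !mxE expr2.
Qed.

(* The singular values of Tr_A |phi><psi| sum to at most 1 for unit vectors:
   their sum is the overlap achieved by the unitary U V^dagger. *)
Lemma sum_singular_values_le1 :
  pure_state psi -> pure_state phi -> \sum_i s 0 i <= 1.
Proof.
case: svd => U_unitary [V_unitary [s_ge0 _]] psi_pure phi_pure.
have overlap : braket phi (tensmx (1%:M : 'M[C]_m) (U *m adj V)) psi = \sum_i s 0 i.
  rewrite braket_svd !mulmxA unitary_adj_mulmx // mul1mx.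
  by rewrite unitary_adj_mulmx // mul1mx mxtrace_diag.
rewrite -(ger0_norm (sumr_ge0 _ (fun i _ => s_ge0 i))) -overlap.
apply: braket_isometry_le1 => //; apply: isometry_id_tens.
rewrite adjM adjK -mulmxA (mulmxA (adj U)) unitary_adj_mulmx // mul1mx.
exact: unitary_mulmx_adj.
Qed.

Lemma braket_sgn_svd (eta : C) :
  braket phi (tensmx (1%:M : 'M[C]_m) (sgn_svd eta U V s)) psi
    = \sum_i (eta < s 0 i)%R%:R * s 0 i.
Proof.
case: svd => U_unitary [V_unitary _].
rewrite braket_svd /sgn_svd sgn_diagE !mulmxA unitary_adj_mulmx // mul1mx.
rewrite -(mulmxA _ (adj V) V) unitary_adj_mulmx // mulmx1 mulmx_diag mxtrace_diag.
by apply: eq_bigr => i _; rewrite !mxE.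
Qed.

Lemma uhlmann_cutoff_bound (eta : C) :
  pure_state psi -> pure_state phi -> 0 <= eta ->
  fidelity (ptraceB (ketbra psi psi)) (ptraceB (ketbra phi phi)) - 2%:R * eta * n%:R
    <= `|braket phi (tensmx (1%:M : 'M[C]_m) (sgn_svd eta U V s)) psi| ^+ 2.
Proof.
move=> psi_pure phi_pure eta_ge0; case: svd => _ [_ [s_ge0 _]].
set above := \sum_i (eta < s 0 i)%R%:R * s 0 i.
set below := \sum_i (~~ (eta < s 0 i))%R%:R * s 0 i.
have split_mass : \sum_i s 0 i = above + below.
  rewrite -big_split; apply: eq_bigr => i _ /=.
  by case: (eta < s 0 i); rewrite /= ?mulr1n ?mulr0n ?mul1r ?mul0r ?addr0 ?add0r.
have above_ge0 : 0 <= above by apply: sumr_ge0 => i _; rewrite mulr_ge0 ?ler0n.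
have below_ge0 : 0 <= below by apply: sumr_ge0 => i _; rewrite mulr_ge0 ?ler0n.
rewrite fidelity_svd braket_sgn_svd -/above ger0_norm // split_mass -mulrA.
apply: sq_drop_le => //; last exact: below_cutoff_le.
by rewrite -split_mass sum_singular_values_le1.
Qed.

Lemma uhlmann_minimal (eta : C) (R : 'M[C]_n) :
  0 <= eta -> partial_isometry R ->
  fidelity (ptraceB (ketbra psi psi)) (ptraceB (ketbra phi phi))
    = `|braket phi (tensmx (1%:M : 'M[C]_m) R) psi| ^+ 2 ->
  loewner_le (adj (sgn_svd eta U V s) *m sgn_svd eta U V s) (adj R *m R).
Proof.
case: svd => U_unitary [V_unitary [s_ge0 _]] eta_ge0 R_pi.
rewrite fidelity_svd braket_svd => /eqP; rewrite eqrXn2 ?sumr_ge0 // => /eqP tight.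
set R' := adj U *m R *m V in tight.
have gramR' : adj R' *m R' = adj V *m (adj R *m R) *m V.
  rewrite /R' !adjM adjK !mulmxA -(mulmxA _ U (adj U)) unitary_mulmx_adj //.
  by rewrite mulmx1.
have P_proj : projector (adj R' *m R').
  rewrite gramR'; apply: projector_conj (partial_isometry_gram R_pi).
  exact: unitary_mulmx_adj.
have top_diag i : eta < s 0 i -> (adj R' *m R') i i = 1.
  move=> s_above; apply: (tight_overlap (projector_diag_le1 P_proj) s_ge0 (esym tight)).
  by rewrite gt_eqF // (le_lt_trans eta_ge0).
have RR : adj R *m R = V *m (adj R' *m R') *m adj V.
  rewrite gramR' !mulmxA unitary_mulmx_adj // mul1mx -mulmxA.
  by rewrite unitary_mulmx_adj // mulmx1.
rewrite /loewner_le sgn_svd_gram // sgn_diagE RR -mulmxBl -mulmxBr.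
rewrite -{1}[V]adjK; apply: psd_conj; apply: projector_psd.
exact: projector_sub_indicator.
Qed.

End UhlmannSVD.

Theorem mainTheorem1 (C : numClosedFieldType) (m n : nat)
  (psi phi : 'cV[C]_(m * n)) (eta : C) (U V : 'M[C]_n) (s : 'rV[C]_n) :
  pure_state psi -> pure_state phi -> 0 <= eta ->
  is_svd (ptraceA (ketbra phi psi)) U V s ->
  let W := sgn_svd eta U V s in
  let rhoA := ptraceB (ketbra psi psi) in
  let sigmaA := ptraceB (ketbra phi phi) in
  [/\ partial_isometry W,
      fidelity rhoA sigmaA - 2%:R * eta * n%:R
        <= `| braket phi (tensmx (1%:M : 'M[C]_m) W) psi | ^+ 2
    & forall R : 'M[C]_n, partial_isometry R ->
        fidelity rhoA sigmaA = `| braket phi (tensmx (1%:M : 'M[C]_m) R) psi | ^+ 2 ->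
        loewner_le (adj W *m W) (adj R *m R)].
Proof.
move=> psi_pure phi_pure eta_ge0 svd W rhoA sigmaA.
have [U_unitary [V_unitary _]] := svd.
split.
- exact: sgn_svd_partial_isometry.
- exact: uhlmann_cutoff_bound.
- by move=> R; apply: uhlmann_minimal.
Qed.
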